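(* Let $\mathbf{L}=(L,\le)$ be a finite nontrivial join-semilattice with greatest element $1$ and let $(R,\vee,\circ)$ be a subsemiring of $(\mathrm{JM}(\mathbf{L}),\vee,\circ)$ such that $k_a\in R$ for all $a\in L$, every $f\in R$ satisfies $k_a\le f$ for some $a\in L$, and for all $a\in L$, $b\in L\setminus\{1\}$ there exists $f\in R$ with $f(x)=b$ for $x\le a$ and $f(x)>b$ otherwise. Then $(R,\vee)$ has a neutral element if and only if $\mathbf{L}$ is a lattice. If this neutral element exists, it is left but not right absorbing in $(R,\vee,\circ)$.
   Context: $\mathrm{JM}(\mathbf{L})$ is the set of maps $L\to L$ preserving binary joins, a semiring under pointwise join and composition, ordered pointwise; $k_a$ is the constant map with value $a$. A finite join-semilattice is a lattice iff it has a least element. An element $r$ is right absorbing if $s\circ r=r$ for all $s\in R$, left absorbing if $r\circ s=r$ for all $s\in R$. *)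

From mathcomp Require Import all_boot all_order.
Set Implicit Arguments. Unset Strict Implicit. Unset Printing Implicit Defensive.
Import Order.TTheory.
Local Open Scope order_scope.

Section JM.
Context {d : Order.disp_t} {L : finTJoinSemilatticeType d}.

Definition join_morph (f : {ffun L -> L}) : Prop :=
  forall x y : L, f (x `|` y) = f x `|` f y.

Definition fjoin (f g : {ffun L -> L}) : {ffun L -> L} := [ffun x => f x `|` g x].
Definition fcomp (f g : {ffun L -> L}) : {ffun L -> L} := [ffun x => f (g x)].

Definition kconst (a : L) : {ffun L -> L} := [ffun => a].

Definition fle (f g : {ffun L -> L}) : Prop := forall x, f x <= g x.

Definition subsemiring_JM (R : {set {ffun L -> L}}) : Prop :=
  [/\ R != set0,
      (forall f, f \in R -> join_morph f),
      (forall f g, f \in R -> g \in R -> fjoin f g \in R) &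
      (forall f g, f \in R -> g \in R -> fcomp f g \in R)].

Definition join_neutral (R : {set {ffun L -> L}}) (e : {ffun L -> L}) : Prop :=
  e \in R /\ forall f, f \in R -> fjoin e f = f /\ fjoin f e = f.

Definition right_absorbing (R : {set {ffun L -> L}}) (r : {ffun L -> L}) : Prop :=
  forall s, s \in R -> fcomp s r = r.
Definition left_absorbing (R : {set {ffun L -> L}}) (r : {ffun L -> L}) : Prop :=
  forall s, s \in R -> fcomp r s = r.

End JM.

Definition is_lattice {d : Order.disp_t} (L : finTJoinSemilatticeType d) : Prop :=
  forall x y : L, exists m : L,
    [/\ m <= x, m <= y & forall z : L, z <= x -> z <= y -> z <= m].

From mathcomp Require Import all_boot all_order.
Import Order.TTheory.
Local Open Scope order_scope.

(* Since R contains every constant map, a neutral element e of (R, join) satisfies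
   e x <= a for all x and a, i.e. e is the constant map at the least element of L.
   Conversely, if L has a least element z then k_z lies below every f in R, hence
   is neutral; and a finite join-semilattice has a least element exactly when it is
   a lattice. A constant map is left absorbing, and k_1 o k_z = k_1 <> k_z as soon
   as z <> 1, i.e. as soon as L is nontrivial. *)

Section FiniteJoinSemilattice.
Context {d : Order.disp_t} {L : finTJoinSemilatticeType d}.

Lemma foldr_join_le (z x : L) (s : seq L) :
  z <= x -> {in s, forall w, w <= x} -> foldr Order.join z s <= x.
Proof.
elim: s => [//|a s IHs] zx sx /=.
rewrite leUx sx ?mem_head //; apply: IHs => // w ws.
by apply: sx; rewrite in_cons ws orbT.
Qed.

Lemma le_foldr_join (z w : L) (s : seq L) : w \in s -> w <= foldr Order.join z s.
Proof.
elim: s => [//|a s IHs]; rewrite in_cons => /orP[/eqP ->|ws] /=.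
  exact: leUl.
exact/lexUr/IHs.
Qed.

Lemma lattice_lower_bound (s : seq L) :
  is_lattice L -> exists m : L, {in s, forall w, m <= w}.
Proof.
move=> latL; elim: s => [|a s [m ms]]; first by exists \top.
have [m' [m'm m'a _]] := latL m a.
exists m' => w; rewrite in_cons => /orP[/eqP -> //|/ms]; exact: le_trans.
Qed.

(* The meet of x and y is the join, started at the least element, of their common
   lower bounds. *)
Lemma lattice_has_least : is_lattice L <-> exists z : L, forall a, z <= a.
Proof.
split=> [latL|[z zL] x y].
  have [z zL] := lattice_lower_bound (enum L) latL.
  by exists z => a; rewrite zL ?mem_enum.
pose lower := [seq w <- enum L | (w <= x) && (w <= y)].
exists (foldr Order.join z lower); split.
- by apply: foldr_join_le => // w; rewrite mem_filter => /andP[/andP[]].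
- by apply: foldr_join_le => // w; rewrite mem_filter => /andP[/andP[]].
- by move=> w wx wy; apply: le_foldr_join; rewrite mem_filter wx wy mem_enum.
Qed.

Lemma least_neq_top {z : L} : (1 < #|L|)%N -> (forall a, z <= a) -> z != \top.
Proof.
move=> cardL zL; apply/eqP => ztop; move: cardL; rewrite ltnNge => /negP; apply.
have all_top (a : L) : a = \top by apply: le_anti; rewrite lex1 -ztop zL.
by apply/fintype_le1P => a b; rewrite (all_top a) (all_top b).
Qed.

End FiniteJoinSemilattice.

Section JoinNeutral.
Context {d : Order.disp_t} {L : finTJoinSemilatticeType d}.
Variable R : {set {ffun L -> L}}.
Hypothesis kconst_in : forall a : L, kconst a \in R.

Lemma join_neutral_le {e : {ffun L -> L}} :
  join_neutral R e -> forall x a, e x <= a.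
Proof.
move=> [_ eR] x a; have [eka _] := eR _ (kconst_in a).
have := congr1 (fun f : {ffun L -> L} => f x) eka.
by rewrite /fjoin /kconst !ffunE => /join_idPr.
Qed.

Lemma kconst_join_neutral (z : L) :
  (forall f, f \in R -> exists a : L, fle (kconst a) f) ->
  (forall a, z <= a) -> join_neutral R (kconst z).
Proof.
move=> above_kconst zL; split=> [|f fR]; first exact: kconst_in.
have [a af] := above_kconst f fR.
have zf x : z <= f x by apply: le_trans (zL a) _; have := af x; rewrite ffunE.
by split; apply/ffunP => x; rewrite !ffunE; [apply/join_idPr | apply/join_idPl].
Qed.

Lemma join_neutral_left_absorbing (e : {ffun L -> L}) :
  join_neutral R e -> left_absorbing R e.
Proof.
move=> eN s _; apply/ffunP => x; rewrite ffunE.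
by apply: le_anti; rewrite !(join_neutral_le eN).
Qed.

Lemma join_neutral_not_right_absorbing (e : {ffun L -> L}) :
  (1 < #|L|)%N -> join_neutral R e -> ~ right_absorbing R e.
Proof.
move=> cardL eN eR; have := eR _ (kconst_in \top).
move/(congr1 (fun f : {ffun L -> L} => f \top)); rewrite !ffunE => etop.
by move: (least_neq_top cardL (join_neutral_le eN \top)); rewrite -etop eqxx.
Qed.

End JoinNeutral.

Theorem proposition7p2 (d : Order.disp_t) (L : finTJoinSemilatticeType d)
  (R : {set {ffun L -> L}}) :
  (1 < #|L|)%N ->
  subsemiring_JM R ->
  (forall a : L, kconst a \in R) ->
  (forall f, f \in R -> exists a : L, fle (kconst a) f) ->
  (forall a b : L, b != \top -> exists2 f, f \in R &
     forall x : L, (x <= a -> f x = b) /\ (~~ (x <= a) -> b < f x)) ->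
  ((exists e, join_neutral R e) <-> is_lattice L) /\
  (forall e, join_neutral R e -> left_absorbing R e /\ ~ right_absorbing R e).
Proof.
move=> cardL _ kconst_in above_kconst _; split; last first.
  move=> e eN; split; first exact: join_neutral_left_absorbing eN.
  exact: join_neutral_not_right_absorbing.
split=> [[e eN]|/lattice_has_least[z zL]].
  by apply/lattice_has_least; exists (e \top); apply: join_neutral_le.
by exists (kconst z); apply: kconst_join_neutral.
Qed.
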